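(* Let $S$ be an additively reduced and additively Furstenberg semidomain and let $G$ be a finitely generated torsion-free abelian group (with a total order compatible with addition). The following statements are equivalent. (1) $\mathscr{A}_+(S)=S^\times$. (2) Every $f\in S[\![G]\!]$ with $|\operatorname{supp}(f)|>1$ can be expressed as the sum of at most three irreducible elements of $S[\![G]\!]$. (3) There exists $n\in\mathbb{N}$ with $n>2$ such that every $f\in S[\![G]\!]$ with $|\operatorname{supp}(f)|>1$ can be expressed as the sum of at most $n$ irreducible elements of $S[\![G]\!]$.
   Context: A semidomain is a subsemiring (containing $0$ and $1$) of an integral domain; all semirings are commutative. For a semidomain $S$, $S^\times$ denotes the group of units of the multiplicative monoid $S\setminus\{0\}$. $S$ is additively reduced if $0$ is the only invertible element of $(S,+)$. An additive atom of $S$ is a nonzero $a\in S$ such that $a=b+c$ with $b,c\in S$ implies $b=0$ or $c=0$; $\mathscr{A}_+(S)$ is the set of additive atoms. $S$ is additively Furstenberg if every nonzero $s\in S$ can be written $s=a+t$ with $a\in\mathscr{A}_+(S)$, $t\in S$. For a torsion-free abelian group $G$ with a fixed total order compatible with addition, the group series semidomain is $S[\![G]\!]=\{\sum_{i=0}^\infty s_ix^{g_i} : s_i\in S,\ g_i\in G,\ g_i<g_{i+1}\text{ for all } i\}$, with addition and multiplication defined as for polynomials; elements are written with the convention that $s_i=0$ implies $s_{i+1}=0$. The support of $f=\sum s_ix^{g_i}$ is $\operatorname{supp}(f)=\{g_i : s_i\neq0\}$. An element $f$ is irreducible if it is nonzero, not a unit of $S[\![G]\!]$, and $f=pq$ implies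 one of $p,q$ is a unit. *)

From mathcomp Require Import all_boot all_order all_algebra.
Set Implicit Arguments. Unset Strict Implicit. Unset Printing Implicit Defensive.
Import Order.TTheory GRing.Theory Num.Theory.
Local Open Scope ring_scope.

Section Semidomain.
Variable R : idomainType.
Variable S : {pred R}.

Definition is_semidomain : Prop :=
  [/\ 0 \in S, 1 \in S,
      (forall a b, a \in S -> b \in S -> a + b \in S) &
      (forall a b, a \in S -> b \in S -> a * b \in S)].

Definition sunit (a : R) : Prop := a \in S /\ exists2 b, b \in S & a * b = 1.

Definition add_reduced : Prop :=
  forall a, a \in S -> (exists2 b, b \in S & a + b = 0) -> a = 0.

Definition add_atom (a : R) : Prop :=
  [/\ a \in S, a != 0 &
      forall b c, b \in S -> c \in S -> a = b + c -> b = 0 \/ c = 0].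

Definition add_furstenberg : Prop :=
  forall s, s \in S -> s != 0 -> exists2 a, add_atom a & exists2 t, t \in S & s = a + t.
End Semidomain.

Section OrderedGroup.
Variable G : zmodType.
Variable lt : rel G.

Definition total_order_compat : Prop :=
  [/\ (forall x, ~~ lt x x),
      (forall x y z, lt x y -> lt y z -> lt x z),
      (forall x y, x != y -> lt x y || lt y x) &
      (forall x y z, lt x y -> lt (x + z) (y + z))].

Definition torsion_free : Prop := forall (g : G) (n : nat), (0 < n)%N -> g *+ n = 0 -> g = 0.

Definition fin_gen : Prop :=
  exists gens : seq G, forall g : G,
    exists c : 'I_(size gens) -> int, g = \sum_(i < size gens) gens`_i *~ c i.
End OrderedGroup.

(* An element  sum_i s_i x^{g_i}  (g_i strictly increasing) is represented by  *)
(* its coefficient function f : G -> R  (f g = coefficient of x^g).           *)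
Section GroupSeries.
Variables (R : idomainType) (S : {pred R}) (G : zmodType) (lt : rel G).

Definition in_series (f : G -> R) : Prop :=
  (forall g, f g \in S) /\
  exists e : nat -> G, (forall i, lt (e i) (e i.+1)) /\
    (forall g, f g != 0 -> exists i, e i = g).

Definition conv_coef (p q : G -> R) (h : G) (c : R) : Prop :=
  exists s : seq G, [/\ uniq s,
    (forall a, p a != 0 -> q (h - a) != 0 -> a \in s) &
    c = \sum_(a <- s) p a * q (h - a)].

Definition series_mul (p q f : G -> R) : Prop := forall h, conv_coef p q h (f h).

Definition series_one : G -> R := fun g => if g == 0 then 1 else 0.

Definition series_nonzero (f : G -> R) : Prop := exists g, f g != 0.

Definition series_unit (u : G -> R) : Prop :=
  in_series u /\ exists v, in_series v /\ series_mul u v series_one.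

Definition series_irred (f : G -> R) : Prop :=
  [/\ in_series f, series_nonzero f, ~ series_unit f &
      forall p q, in_series p -> in_series q -> series_mul p q f ->
        series_unit p \/ series_unit q].

Definition supp_gt1 (f : G -> R) : Prop := exists a b, [/\ a != b, f a != 0 & f b != 0].

Definition sum_of_irred_le (n : nat) (f : G -> R) : Prop :=
  exists l : seq (G -> R), [/\ (size l <= n)%N,
    (forall i, (i < size l)%N -> series_irred (nth (fun _ => 0) l i)) &
    forall g, f g = \sum_(p <- l) p g].
End GroupSeries.

(* (1) => (2). Let g0 < g1 be the two least support points of f and
   delta = g1 - g0. A series whose two least support points are m < e and
   which has a unit coefficient is irreducible as soon as no support point
   x <> m has x + (e - m) in its support, except x = e with an atomic
   coefficient there. Colour the support points above g1 (and g1 itself when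
   f g1 is not a unit) by the parity of the length of their downward
   delta-chain inside the support. The even part, in which no two points are
   delta apart, is a sum of at most two irreducibles; the odd part, together
   with a unit split off the coefficient just below its least point, is
   irreducible. Since atoms are units, such a unit can be split off every
   nonzero coefficient.
   (3) => (1). Units are atoms because 1 is. If the atom a were not a unit,
   each irreducible summand of a (1 + x^d + ... + x^((n+1)d)) would take only
   the values 0 and a, hence be a monomial (otherwise it factors as a times
   the indicator of its support), and n + 2 summands would be needed. *)

From mathcomp Require Import all_boot all_order all_algebra.
From Stdlib Require Import Classical.
Set Implicit Arguments. Unset Strict Implicit. Unset Printing Implicit Defensive.
Import GRing.Theory.
Local Open Scope ring_scope.

Lemma subr_mulrS (V : zmodType) (x d : V) n : x - d *+ n.+1 = (x - d) - d *+ n.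
Proof. by rewrite mulrS opprD addrA. Qed.

Section OrderedGroup.
Variables (G : zmodType) (lt : rel G).
Hypothesis Hord : total_order_compat lt.

Definition le (x y : G) := (x == y) || lt x y.

Lemma ltxx x : ~~ lt x x. Proof. by case: Hord. Qed.

Lemma lt_trans x y z : lt x y -> lt y z -> lt x z.
Proof. by case: Hord => _ + _ _; apply. Qed.

Lemma lt_total x y : x != y -> lt x y || lt y x.
Proof. by case: Hord => _ _ + _; apply. Qed.

Lemma ltD2r z x y : lt x y -> lt (x + z) (y + z).
Proof. by case: Hord => _ _ _; apply. Qed.

Lemma ltD2l z x y : lt x y -> lt (z + x) (z + y).
Proof. by rewrite ![z + _]addrC; apply: ltD2r. Qed.

Lemma lt_eqF x y : lt x y -> (x == y) = false.
Proof. by move=> lxy; apply/negbTE/eqP => exy; move: lxy; rewrite exy (negbTE (ltxx y)). Qed.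

Lemma gt_eqF x y : lt x y -> (y == x) = false.
Proof. by rewrite eq_sym; apply: lt_eqF. Qed.

Lemma lt_asym x y : lt x y -> lt y x = false.
Proof. by move=> lxy; apply/negbTE/negP => /(lt_trans lxy); rewrite (negbTE (ltxx x)). Qed.

Lemma lexx x : le x x. Proof. by rewrite /le eqxx. Qed.

Lemma ltW x y : lt x y -> le x y. Proof. by rewrite /le => ->; rewrite orbT. Qed.

Lemma le_lt_trans x y z : le x y -> lt y z -> lt x z.
Proof. by case/orP => [/eqP ->//|]; apply: lt_trans. Qed.

Lemma lt_le_trans x y z : lt x y -> le y z -> lt x z.
Proof. by move=> lxy /orP[/eqP <-//|]; apply: lt_trans. Qed.

Lemma lt_geF x y : lt x y -> le y x = false.
Proof. by move=> lxy; rewrite /le (gt_eqF lxy) (lt_asym lxy). Qed.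

Lemma le_anti x y : le x y -> le y x -> x = y.
Proof. by case/orP => [/eqP//|/lt_geF ->]. Qed.

Lemma le_eqVlt x y : le x y -> x = y \/ lt x y.
Proof. by case/orP => [/eqP|]; [left | right]. Qed.

Lemma leD x y z t : le x y -> le z t -> le (x + z) (y + t).
Proof.
move=> /orP[/eqP->|lxy] /orP[/eqP->|lzt]; first exact: lexx.
- exact/ltW/ltD2l.
- exact/ltW/ltD2r.
by apply/ltW/(lt_trans (ltD2r z lxy))/ltD2l.
Qed.

Lemma ltD_le x y z t : lt x y -> le z t -> lt (x + z) (y + t).
Proof. by move=> /(ltD2r z) lxy /(leD (lexx y)); apply: lt_le_trans. Qed.

Lemma le_ltD x y z t : le x y -> lt z t -> lt (x + z) (y + t).
Proof. by move=> lexy /ltD_le /(_ lexy); rewrite addrC [t + _]addrC. Qed.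

Lemma subr_gt0 x y : lt x y -> lt 0 (y - x).
Proof. by move=> /(ltD2r (- x)); rewrite subrr. Qed.

Lemma ltDr x d : lt 0 d -> lt x (x + d).
Proof. by move=> /(ltD2l x); rewrite addr0. Qed.

Lemma ltBr x d : lt 0 d -> lt (x - d) x.
Proof. by move=> /(ltD2l (x - d)); rewrite addr0 subrK. Qed.

Lemma mulrn_incr d : lt 0 d -> forall i, lt (d *+ i) (d *+ i.+1).
Proof. by move=> d_gt0 i; rewrite mulrSr; apply: ltDr. Qed.

Lemma exists_gt0 : (exists g : G, g != 0) -> exists d, lt 0 d.
Proof.
case=> g /lt_total /orP[/(ltD2r (- g))|]; last by exists g.
by rewrite subrr add0r; exists (- g).
Qed.

Section Enumeration.
Variable e : nat -> G.
Hypothesis e_incr : forall i, lt (e i) (e i.+1).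

Lemma enum_lt i j : (i < j)%N -> lt (e i) (e j).
Proof.
elim: j => // j IH; rewrite ltnS leq_eqVlt => /orP[/eqP ->//|/IH].
by move/lt_trans; apply.
Qed.

Lemma enum_le i j : (i <= j)%N -> le (e i) (e j).
Proof. by rewrite leq_eqVlt => /orP[/eqP ->|/enum_lt/ltW]; rewrite ?lexx. Qed.

Lemma enum_inj : injective e.
Proof.
by move=> i j eij; case: (ltngtP i j) => // /enum_lt; rewrite eij (negbTE (ltxx _)).
Qed.

Lemma enum_lt_ltn i j : lt (e i) (e j) -> (i < j)%N.
Proof. by move=> lij; rewrite ltnNge; apply/negP => /enum_le; rewrite lt_geF. Qed.

Lemma enum_no_descending_chain (y : nat -> G) :
  (forall k, lt (y k.+1) (y k)) -> ~ (forall k, exists i, e i = y k).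
Proof.
move=> y_decr y_enum; have [i0 ei0] := y_enum 0%N.
suff /(_ i0.+1) [i [_]] : forall k, exists i, e i = y k /\ (i + k <= i0)%N.
  by rewrite addnS ltnNge leq_addl.
elim=> [|k [i [ei ik]]]; first by exists i0; rewrite addn0.
have [j ej] := y_enum k.+1; exists j; split => //.
have ji : (j < i)%N by apply: enum_lt_ltn; rewrite ej ei.
by rewrite addnS (leq_trans _ ik) // ltn_add2r.
Qed.

(* [col x] is the parity of the length of the run x - d, x - 2d, ... inside W,
   which is finite because W is well ordered. *)
Lemma parity_coloring (W : pred G) d :
  (forall y, W y -> exists i, e i = y) -> lt 0 d ->
  exists col : G -> bool, forall x, col x = if W (x - d) then ~~ col (x - d) else true.
Proof.
move=> W_enum d_gt0.
have run_end x : exists n, ~~ W (x - d *+ n.+1).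
  apply: NNPP => no_end; apply: (enum_no_descending_chain (y := fun k => x - d *+ k.+1)).
    by move=> k; rewrite [d *+ k.+2]mulrSr opprD addrA; apply: ltBr.
  by move=> k; apply: W_enum; apply/negPn/negP => Wk; apply: no_end; exists k.
pose len x := ex_minn (run_end x).
have len_step x : len x = if W (x - d) then (len (x - d)).+1 else 0%N.
  rewrite /len; case: (ex_minnP (run_end x)) => n Pn n_min.
  case: (ex_minnP (run_end (x - d))) => k Pk k_min.
  case: ifP => [Wx|/negbT Wx]; last by apply/eqP; rewrite -leqn0 n_min.
  case: n Pn n_min => [|n Pn n_min]; first by rewrite mulr1n Wx.
  have le_nk : (n.+1 <= k.+1)%N by apply: n_min; rewrite subr_mulrS.
  have le_kn : (k <= n)%N by apply: k_min; rewrite -subr_mulrS.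
  by apply/eqP; rewrite eqn_leq le_nk ltnS le_kn.
exists (fun y : G => ~~ odd (len y)) => x; rewrite [len x]len_step.
by case: ifP; rewrite //= negbK.
Qed.

End Enumeration.
End OrderedGroup.

Section Semidomain.
Variables (R : idomainType) (S : {pred R}).
Hypothesis HS : is_semidomain S.

Lemma mem_S0 : 0 \in S. Proof. by case: HS. Qed.
Lemma mem_S1 : 1 \in S. Proof. by case: HS. Qed.
Lemma mem_SD a b : a \in S -> b \in S -> a + b \in S. Proof. by case: HS => _ _ + _; apply. Qed.
Lemma mem_SM a b : a \in S -> b \in S -> a * b \in S. Proof. by case: HS => _ _ _; apply. Qed.

Lemma mem_S_sum (I : Type) (r : seq I) (P : pred I) (F : I -> R) :
  (forall i, F i \in S) -> \sum_(i <- r | P i) F i \in S.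
Proof. by move=> FS; apply: (big_ind (fun x => x \in S)); [exact: mem_S0 | exact: mem_SD |]. Qed.

Lemma sunit_neq0 a : sunit S a -> a != 0.
Proof. by case=> _ [b _ ab1]; apply/eqP => a0; move/eqP: ab1; rewrite a0 mul0r eq_sym oner_eq0. Qed.

Lemma sunit_mulL a b : a \in S -> b \in S -> sunit S (a * b) -> sunit S a.
Proof.
by move=> aS bS [_ [c cS]]; rewrite -mulrA => abc; split; last exists (b * c); rewrite ?mem_SM.
Qed.

Section Reduced.
Hypothesis Hred : add_reduced S.

Lemma addS_eq0 a b : a \in S -> b \in S -> a + b = 0 -> a = 0 /\ b = 0.
Proof.
move=> aS bS ab0; have a0 : a = 0 by apply: Hred => //; exists b.
by move: ab0; rewrite a0 add0r.
Qed.

Lemma sumS_eq0 (I : eqType) (r : seq I) (P : pred I) (F : I -> R) :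
  (forall i, F i \in S) -> \sum_(i <- r | P i) F i = 0 ->
  forall i, i \in r -> P i -> F i = 0.
Proof.
move=> FS; elim: r => // x r IH; rewrite big_cons => sum0 i.
have split0 := addS_eq0 (FS x) (mem_S_sum r P FS).
rewrite in_cons => /orP[/eqP ->|ir] Pi; first by move: sum0; rewrite Pi => /split0[].
by apply: IH => //; case: (P x) sum0 => // /split0[].
Qed.

Lemma sumS_neq0 (I : eqType) (r : seq I) (P : pred I) (F : I -> R) j :
  (forall i, F i \in S) -> j \in r -> P j -> F j != 0 -> \sum_(i <- r | P i) F i != 0.
Proof. by move=> FS jr Pj; apply: contra_neq => /sumS_eq0; apply. Qed.

Lemma sum_not_atom (I : eqType) (r : seq I) (F : I -> R) i j :
  uniq r -> i \in r -> j \in r -> i != j -> (forall k, F k \in S) ->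
  F i != 0 -> F j != 0 -> ~ add_atom S (\sum_(k <- r) F k).
Proof.
move=> r_uniq ir jr ij FS Fi Fj [_ _ atom]; rewrite (bigD1_seq i) //= in atom.
have [/eqP|/eqP] := atom _ _ (FS i) (mem_S_sum _ _ FS) erefl; first by rewrite (negbTE Fi).
by apply/negP; apply: (sumS_neq0 FS jr); rewrite // eq_sym.
Qed.

End Reduced.

Section Furstenberg.
Hypothesis Hfur : add_furstenberg S.

Lemma atom1 : add_atom S 1.
Proof.
have [a [aS a0 atom] [t tS e1]] := Hfur mem_S1 (oner_neq0 R).
have : a = a * a + a * t by rewrite -mulrDr -e1 mulr1.
case/(atom _ _ (mem_SM aS aS) (mem_SM aS tS)) => /eqP; rewrite mulf_eq0 (negbTE a0) //=.
by move=> /eqP t0; rewrite e1 t0 addr0.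
Qed.

(* Multiplying a = b + c by the inverse of a gives a decomposition of the atom 1. *)
Lemma sunit_atom a : sunit S a -> add_atom S a.
Proof.
move=> ua; have [aS [w wS aw]] := ua; split; rewrite ?sunit_neq0 //.
have [_ _ atom] := atom1.
have w0 : w != 0 by apply/eqP => w0; move/eqP: aw; rewrite w0 mulr0 eq_sym oner_eq0.
move=> b c bS cS abc; have : 1 = b * w + c * w by rewrite -mulrDl -abc aw.
by case/(atom _ _ (mem_SM bS wS) (mem_SM cS wS)) => /eqP; rewrite mulf_eq0 (negbTE w0) orbF => /eqP;
  [left | right].
Qed.

End Furstenberg.

Lemma atom_sum_term (I : finType) (F : I -> R) j :
  add_atom S (\sum_i F i) -> (forall i, F i \in S) -> F j != 0 -> F j = \sum_i F i.
Proof.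
move=> [_ _ atom] FS Fj; rewrite (bigD1 j) //= in atom *.
have [/eqP|->] := atom _ _ (FS j) (mem_S_sum _ _ FS) erefl; first by rewrite (negbTE Fj).
by rewrite addr0.
Qed.

End Semidomain.

Lemma sum_seq_single (R : nmodType) (I : eqType) (r : seq I) (F : I -> R) j :
  uniq r -> (forall i, i != j -> F i = 0) -> (F j != 0 -> j \in r) ->
  \sum_(i <- r) F i = F j.
Proof.
move=> r_uniq F0 jr; case: (boolP (j \in r)) => [jr'|jNr].
  by rewrite (bigD1_seq j) //= big1_seq ?addr0 // => i /andP[/F0].
rewrite big1_seq => [|i /andP[_ ir]]; last by apply: F0; apply: contraNneq jNr => <-.
by apply/esym/eqP; apply: contraR jNr.
Qed.

Section Series.
Variables (R : idomainType) (S : {pred R}) (G : zmodType) (lt : rel G).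
Hypothesis HS : is_semidomain S.
Hypothesis Hred : add_reduced S.
Hypothesis Hord : total_order_compat lt.

Local Notation in_series := (in_series S lt).
Local Notation le := (le lt).

Lemma in_series_mem f : in_series f -> forall g, f g \in S.
Proof. by case. Qed.

Lemma in_series_sub f h : in_series f -> (forall g, h g \in S) ->
  (forall g, h g != 0 -> f g != 0) -> in_series h.
Proof.
by move=> [_ [e [e_incr f_enum]]] hS hf; split => //; exists e; split => // g /hf /f_enum.
Qed.

Lemma in_series_arith (a d : G) f : lt 0 d -> (forall g, f g \in S) ->
  (forall g, f g != 0 -> exists i, g = a + d *+ i) -> in_series f.
Proof.
move=> d_gt0 fS f_arith; split => //; exists (fun i => a + d *+ i); split.
  by move=> i; apply: (ltD2l Hord); apply: (mulrn_incr Hord).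
by move=> g /f_arith[i ->]; exists i.
Qed.

Lemma in_series_gt0 f : in_series f -> exists d, lt 0 d.
Proof. by move=> [_ [e [e_incr _]]]; exists (e 1%N - e 0%N); apply: subr_gt0. Qed.

Lemma series_min f (P : pred G) : in_series f -> (exists2 x, P x & f x != 0) ->
  exists m, [/\ P m, f m != 0 & forall y, P y -> f y != 0 -> le m y].
Proof.
move=> [_ [e [e_incr f_enum]]] [x Px fx].
have ex_i : exists i, P (e i) && (f (e i) != 0).
  by have [i ei] := f_enum x fx; exists i; rewrite ei Px.
case: (ex_minnP ex_i) => i /andP[Pi fi] i_min; exists (e i); split => // y Py fy.
by have [j ej] := f_enum y fy; rewrite -ej; apply: enum_le => //; apply: i_min; rewrite ej Py fy.
Qed.

Definition least_two (f : G -> R) (g0 g1 : G) : Prop :=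
  [/\ lt g0 g1, f g0 != 0, f g1 != 0 & forall x, f x != 0 -> x = g0 \/ le g1 x].

Lemma least_two_exists f : in_series f -> supp_gt1 f -> exists g0 g1, least_two f g0 g1.
Proof.
move=> hf [a [b [ab fa fb]]].
have [g0 [_ f0 g0_min]] := series_min (P := predT) hf (ex_intro2 _ _ a isT fa).
have [|g1 [g10 f1 g1_min]] := series_min (P := predC1 g0) hf.
  by case: (eqVneq a g0) => [ag0|]; [exists b; rewrite //= -ag0 eq_sym | exists a].
exists g0, g1; split => //.
  by have [g01|//] := le_eqVlt (g0_min g1 isT f1); move: g10; rewrite /= g01 eqxx.
by move=> x fx; case: (eqVneq x g0) => [|xg0]; [left | right; apply: g1_min].
Qed.

Lemma single_or_least_two f a : in_series f -> f a != 0 ->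
  (forall x, f x != 0 -> x = a) \/ exists g0 g1, least_two f g0 g1.
Proof.
move=> hf fa; case: (classic (supp_gt1 f)) => [/(least_two_exists hf)|not_gt1]; first by right.
left=> x fx; apply: NNPP => xa; apply: not_gt1; exists x, a; split => //; exact/eqP.
Qed.

Lemma series_mulC (p q h : G -> R) : series_mul p q h -> series_mul q p h.
Proof.
move=> pq z; have [s [s_uniq s_supp ->]] := pq z.
exists [seq z - a | a <- s]; split.
- by rewrite map_inj_uniq //; apply/inv_inj/subKr.
- by move=> a qa pa; apply/mapP; exists (z - a); rewrite ?subKr // s_supp ?subKr.
- by rewrite big_map; apply: eq_bigr => a _; rewrite subKr mulrC.
Qed.

Lemma series_mul_supp (p q h : G -> R) z : series_mul p q h -> h z != 0 ->
  exists x, p x != 0 /\ q (z - x) != 0.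
Proof.
move=> pq; have [s [_ _ ->]] := pq z => /eqP sum_neq0.
apply: NNPP => none; apply: sum_neq0; apply: big1_seq => a _.
have [->|pa] := eqVneq (p a) 0; first by rewrite mul0r.
have [->|qa] := eqVneq (q (z - a)) 0; first by rewrite mulr0.
by case: none; exists a.
Qed.

Lemma series_mul_neq0 (p q h : G -> R) x y : (forall g, p g \in S) -> (forall g, q g \in S) ->
  series_mul p q h -> p x != 0 -> q y != 0 -> h (x + y) != 0.
Proof.
move=> pS qS pq px qy; have [s [_ s_supp ->]] := pq (x + y).
have xyK : x + y - x = y by rewrite addrC addKr.
apply: (@sumS_neq0 _ _ HS Hred _ _ _ _ x) => //; first by move=> a; apply: (mem_SM HS).
  by rewrite s_supp // xyK.
by rewrite xyK mulf_neq0.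
Qed.

Lemma series_mul_single (p q h : G -> R) a z : series_mul p q h -> (forall x, p x != 0 -> x = a) ->
  h z = p a * q (z - a).
Proof.
move=> pq p_single; have [s [s_uniq s_supp ->]] := pq z.
apply: sum_seq_single => // [x xa|]; last by rewrite mulf_eq0 negb_or => /andP[]; apply: s_supp.
by apply/eqP; rewrite mulf_eq0; apply: contraR xa => /norP[/p_single ->]; rewrite eqxx.
Qed.

Lemma series_unit_single u x y : series_unit S lt u -> u x != 0 -> u y != 0 -> x = y.
Proof.
move=> [[uS _] [v [[vS _] uv]]] ux uy.
have one0 : series_one R (0 : G) != 0 by rewrite /series_one eqxx oner_neq0.
have [x0 [_ vx0]] := series_mul_supp uv one0.
have at0 a : u a != 0 -> a + (0 - x0) = 0.
  move/(series_mul_neq0 uS vS uv)/(_ vx0).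
  by rewrite /series_one; case: ifP => [/eqP //|_]; rewrite eqxx.
by apply: (addIr (0 - x0)); rewrite !at0.
Qed.

Lemma series_unit_sunit u x : series_unit S lt u -> u x != 0 -> sunit S (u x).
Proof.
move=> uu ux; have [[uS _] [v [[vS _] uv]]] := uu.
have := series_mul_single 0 uv (fun y uy => series_unit_single uu uy ux).
by rewrite /series_one eqxx => /esym uv1; split => //; exists (v (0 - x)).
Qed.

Lemma single_unit p a : in_series p -> (forall x, p x != 0 -> x = a) -> sunit S (p a) ->
  series_unit S lt p.
Proof.
move=> hp p_single [_ [w wS paw]]; split => //.
have [d d_gt0] := in_series_gt0 hp.
exists (fun x => if x == - a then w else 0); split.
  apply: (in_series_arith (a := - a) d_gt0) => [x|x]; first by case: ifP; rewrite ?(mem_S0 HS).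
  by case: ifP => [/eqP -> _|]; [exists 0%N; rewrite addr0 | rewrite eqxx].
move=> z; exists [:: a]; split => //; first by move=> x /p_single ->; rewrite inE.
by rewrite big_seq1 /series_one subr_eq addNr; case: ifP; rewrite ?mulr0.
Qed.

Lemma single_factor_unit p q h a z : in_series p -> in_series q -> series_mul p q h ->
  (forall x, p x != 0 -> x = a) -> sunit S (h z) -> series_unit S lt p.
Proof.
move=> hp hq pq p_single; rewrite (series_mul_single _ pq p_single) => hz.
by apply: (single_unit hp p_single); apply: (sunit_mulL HS _ _ hz); apply: in_series_mem.
Qed.

Lemma least_two_min f g0 g1 x : least_two f g0 g1 -> f x != 0 -> le g0 x.
Proof. by case=> g01 _ _ f_supp /f_supp [->|/(lt_le_trans Hord g01)/(ltW)]; rewrite ?(lexx lt). Qed.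

Lemma least_two_next f g0 g1 x : least_two f g0 g1 -> f x != 0 -> lt g0 x -> le g1 x.
Proof. by case=> _ _ _ f_supp /f_supp [->|//]; rewrite (negbTE (ltxx Hord g0)). Qed.

Lemma least_two_mul p q h a0 a1 b0 b1 m e :
  (forall g, p g \in S) -> (forall g, q g \in S) -> series_mul p q h ->
  least_two p a0 a1 -> least_two q b0 b1 -> least_two h m e ->
  m = a0 + b0 /\ (e = a0 + b1 \/ e = a1 + b0).
Proof.
move=> pS qS pq pa qb hme; have [a01 pa0 pa1 p_supp] := pa; have [b01 qb0 qb1 q_supp] := qb.
have [me hm he _] := hme; have mul_nz := series_mul_neq0 pS qS pq.
have h_ge w : h w != 0 -> le (a0 + b0) w.
  case/(series_mul_supp pq) => x [px qx]; rewrite -[w](subrKC x).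
  exact: (leD Hord (least_two_min pa px) (least_two_min qb qx)).
have m_eq : m = a0 + b0.
  exact: (le_anti Hord (least_two_min hme (mul_nz _ _ pa0 qb0)) (h_ge m hm)).
have e_le w : h w != 0 -> lt m w -> le e w by apply: least_two_next hme.
split => //; have [x [px qx]] := series_mul_supp pq he.
have e_split : e = x + (e - x) by rewrite subrKC.
have [xa0|xa0] := eqVneq x a0.
- left; rewrite xa0 in qx e_split; apply: (le_anti Hord).
    apply: (e_le _ (mul_nz _ _ pa0 qb1)); rewrite m_eq; exact: (le_ltD Hord (lexx lt a0) b01).
  rewrite [X in le _ X]e_split; apply: (leD Hord (lexx lt a0)).
  have [eb0|//] := q_supp _ qx.
  by move: me; rewrite m_eq -eb0 subrKC (negbTE (ltxx Hord e)).
- right; have [xa|a1x] := p_supp _ px; first by rewrite xa eqxx in xa0.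
  apply: (le_anti Hord).
    apply: (e_le _ (mul_nz _ _ pa1 qb0)); rewrite m_eq; exact: (ltD_le Hord a01 (lexx lt b0)).
  by rewrite [X in le _ X]e_split; exact: (leD Hord a1x (least_two_min qb qx)).
Qed.

(* A factor with a single support point is a unit, because its coefficient
   divides a unit coefficient of h. If neither factor is, let a0 < a1 and
   b0 < b1 be their least support points: the hypothesis, applied to whichever
   of a0 + b1 and a1 + b0 is not e, forces a0 + b1 = a1 + b0 = e, so the atom
   h e contains the two nonzero terms p a0 q b1 and p a1 q b0. *)
Lemma irred_criterion h m e :
  in_series h -> least_two h m e -> (exists z, sunit S (h z)) ->
  (forall x, h x != 0 -> x != m -> h (x + (e - m)) != 0 -> x = e /\ add_atom S (h e)) ->
  series_irred S lt h.
Proof.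
move=> hh hme [z hz] h_step; have [me hm he _] := hme.
split => //; first by exists m.
  by move=> /series_unit_single /(_ hm he) /eqP; rewrite (lt_eqF Hord me).
move=> p q hp hq pq; have [x [px qx]] := series_mul_supp pq hm.
have [p_single|[a0 [a1 pa]]] := single_or_least_two hp px.
  by left; apply: single_factor_unit hp hq pq p_single hz.
have [q_single|[b0 [b1 qb]]] := single_or_least_two hq qx.
  by right; apply: single_factor_unit hq hp (series_mulC pq) q_single hz.
exfalso; have pS := in_series_mem hp; have qS := in_series_mem hq; clear x px qx hp hq.
wlog [m_eq e_eq] : p q a0 a1 b0 b1 pS qS pq pa qb / m = a0 + b0 /\ e = a0 + b1.
  move=> wlog_e; have [m_eq [eY|eX]] := least_two_mul pS qS pq pa qb hme.
    exact: (wlog_e p q a0 a1 b0 b1).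
  apply: (wlog_e q p b0 b1 a0 a1 qS pS (series_mulC pq) qb pa).
  by rewrite m_eq eX; split; apply: addrC.
have [a01 pa0 pa1 _] := pa; have [b01 qb0 qb1 _] := qb.
have mul_nz := series_mul_neq0 pS qS pq.
have [Xe atom] : a1 + b0 = e /\ add_atom S (h e).
  have X_gt : lt m (a1 + b0) by rewrite m_eq; exact: (ltD_le Hord a01 (lexx lt b0)).
  apply: h_step; first exact: (mul_nz _ _ pa1 qb0).
    by rewrite (gt_eqF Hord X_gt).
  by rewrite e_eq m_eq [a0 + b1]addrC addrKA -addrA subrKC; exact: (mul_nz _ _ pa1 qb1).
have [s [s_uniq s_supp he_sum]] := pq e; rewrite he_sum in atom.
have e_a0 : e - a0 = b1 by rewrite e_eq [a0 + b1]addrC addrK.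
have e_a1 : e - a1 = b0 by rewrite -Xe [a1 + b0]addrC addrK.
apply: (sum_not_atom HS Hred (F := fun a => p a * q (e - a)) s_uniq _ _
  (negbT (lt_eqF Hord a01)) _ _ _ atom).
- by rewrite s_supp ?e_a0.
- by rewrite s_supp ?e_a1.
- by move=> a; apply: (mem_SM HS).
- by rewrite e_a0 mulf_neq0.
- by rewrite e_a1 mulf_neq0.
Qed.
End Series.

Section SumOfIrreducibles.
Variables (R : idomainType) (S : {pred R}) (G : zmodType) (lt : rel G).

Lemma sum_of_irred_le1 h : series_irred S lt h -> sum_of_irred_le S lt 1 h.
Proof. by move=> h_irr; exists [:: h]; split => // [[]|g]; rewrite ?big_seq1. Qed.

Lemma sum_of_irred_leS n (q h k : G -> R) : series_irred S lt q -> sum_of_irred_le S lt n h ->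
  (forall g, k g = q g + h g) -> sum_of_irred_le S lt n.+1 k.
Proof.
move=> q_irr [l [l_size l_irr h_sum]] k_sum; exists (q :: l); split => // [[|i]|g] //=.
  by rewrite ltnS; apply: l_irr.
by rewrite big_cons k_sum h_sum.
Qed.

Lemma sum_of_irred_le_mono m n h :
  (m <= n)%N -> sum_of_irred_le S lt m h -> sum_of_irred_le S lt n h.
Proof. by move=> mn [l [l_size l_irr h_sum]]; exists l; split => //; apply: leq_trans mn. Qed.

End SumOfIrreducibles.

Section ThreeIrreducibles.
Variables (R : idomainType) (S : {pred R}) (G : zmodType) (lt : rel G).
Hypothesis HS : is_semidomain S.
Hypothesis Hred : add_reduced S.
Hypothesis Hord : total_order_compat lt.
Hypothesis Hfur : add_furstenberg S.
Hypothesis atom_sunit : forall a, a \in S -> (add_atom S a <-> sunit S a).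

Local Notation le := (le lt).

Lemma sunit_split s : s \in S -> s != 0 -> exists u t, [/\ sunit S u, t \in S & s = u + t].
Proof.
move=> sS s0; have [a a_atom [t tS s_split]] := Hfur sS s0; have [aS _ _] := a_atom.
by exists a, t; split => //; apply/atom_sunit.
Qed.

(* W is the part of the support to be coloured: everything above g1, and g1
   itself exactly when f g1 is not a unit. *)
Section Window.
Variables (f : G -> R) (g0 g1 : G) (W : pred G).
Hypothesis hf : in_series S lt f.
Hypothesis f_least : least_two lt f g0 g1.
Hypothesis W_supp : forall x, W x -> f x != 0.
Hypothesis W_above : forall x, f x != 0 -> lt g1 x -> W x.
Hypothesis W_g0 : ~~ W g0.
Hypothesis W_g1 : W g1 \/ sunit S (f g1).
Hypothesis W_g1_nonunit : W g1 -> ~ sunit S (f g1).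

Local Notation delta := (g1 - g0).

Lemma delta_gt0 : lt 0 delta.
Proof. by case: f_least => g01 _ _ _; apply: subr_gt0. Qed.

Section Coloring.
Variable col : G -> bool.
Hypothesis col_parity : forall x, col x = if W (x - delta) then ~~ col (x - delta) else true.

Lemma col_step x : W x -> col (x + delta) = ~~ col x.
Proof. by move=> Wx; rewrite col_parity addrK Wx. Qed.

Definition even_part (k : G -> R) : Prop :=
  (forall x, k x \in S) /\ forall x, k x != 0 -> f x != 0 /\ (W x -> col x).

Lemma even_part_sub h k : even_part h -> (forall x, k x \in S) ->
  (forall x, k x != 0 -> h x != 0) -> even_part k.
Proof. by move=> [_ h_even] kS kh; split=> // x /kh /h_even. Qed.

Lemma even_part_irred k : even_part k -> k g0 != 0 -> k g1 != 0 -> (exists z, sunit S (k z)) ->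
  W g1 \/ add_atom S (k g1) -> series_irred S lt k.
Proof.
move=> [kS k_even] k0 k1 k_unit W1_atom; have [g01 _ _ f_supp] := f_least.
have hk : in_series S lt k by apply: (in_series_sub hf kS) => x /k_even[].
have k_least : least_two lt k g0 g1 by split => // x /k_even[/f_supp].
apply: (irred_criterion HS Hred Hord hk k_least k_unit) => x kx xg0 kxd.
have [fx x_even] := k_even x kx; have [fxd xd_even] := k_even _ kxd.
have g1x : le g1 x by case: (f_supp x fx) => // xg0'; rewrite xg0' eqxx in xg0.
have no_W : ~ W x.
  move=> Wx; have Wxd : W (x + delta).
    by apply: W_above fxd (le_lt_trans Hord g1x (ltDr Hord _ delta_gt0)).
  by move: (xd_even Wxd); rewrite col_step // x_even.
have [xg1|] := le_eqVlt g1x; last by move/(W_above fx).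
by rewrite -xg1; case: W1_atom => [W1|]; [case: no_W; rewrite -xg1 | split].
Qed.

Lemma even_part_sum2 h : even_part h -> h g0 != 0 -> h g1 != 0 -> W g1 \/ sunit S (h g1) ->
  sum_of_irred_le S lt 2 h.
Proof.
move=> h_even h0 h1 W1_unit; have [hS _] := h_even; have [g01 _ _ _] := f_least.
case: (classic (exists z, sunit S (h z))) => [h_unit|no_unit].
  apply: (sum_of_irred_le_mono (m := 1)) => //.
  apply: sum_of_irred_le1; apply: even_part_irred => //.
  by case: W1_unit => [|/(sunit_atom HS Hfur)]; [left | right].
have W1 : W g1 by case: W1_unit => // u1; case: no_unit; exists g1.
have [u0 [t0 [u0_unit t0S h0_split]]] := sunit_split (hS g0) h0.
have [u1 [t1 [u1_unit t1S h1_split]]] := sunit_split (hS g1) h1.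
have t0_neq0 : t0 != 0.
  by apply: contra_not_neq no_unit => t0_0; exists g0; rewrite h0_split t0_0 addr0.
have t1_neq0 : t1 != 0.
  by apply: contra_not_neq no_unit => t1_0; exists g1; rewrite h1_split t1_0 addr0.
have g10 := gt_eqF Hord g01.
have S0 := mem_S0 HS; have u0S : u0 \in S by case: u0_unit.
have u1S : u1 \in S by case: u1_unit.
have u0_neq0 := sunit_neq0 u0_unit; have u1_neq0 := sunit_neq0 u1_unit.
pose r x := if x == g0 then t0 else if x == g1 then u1 else 0.
pose s x := if x == g0 then u0 else if x == g1 then t1 else h x.
apply: (sum_of_irred_leS (q := r) (h := s)); last first.
- move=> x; rewrite /r /s; have [->|_] := eqVneq x g0; first by rewrite h0_split addrC.
  by have [->|_] := eqVneq x g1; rewrite ?h1_split ?add0r.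
- apply: sum_of_irred_le1; apply: even_part_irred; rewrite /s ?eqxx ?g10 //.
  + apply: even_part_sub h_even _ _ => x; rewrite /s.
      by have [_|_] := eqVneq x g0; last have [_|_] := eqVneq x g1.
    by have [->|_] := eqVneq x g0; last have [->|_] := eqVneq x g1.
  + by exists g0; rewrite eqxx.
  + by left.
- apply: even_part_irred; rewrite /r ?eqxx ?g10 //.
  + apply: even_part_sub h_even _ _ => x; rewrite /r.
      by have [_|_] := eqVneq x g0; last have [_|_] := eqVneq x g1.
    by have [->|_] := eqVneq x g0; last have [->|_] := eqVneq x g1; rewrite ?eqxx.
  + by exists g1; rewrite g10 eqxx.
  + by left.
Qed.

Lemma odd_part_irred b0 u : W b0 -> ~~ col b0 ->
  (forall y, W y && ~~ col y -> f y != 0 -> le b0 y) -> sunit S u ->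
  series_irred S lt (fun x => if x == b0 - delta then u else if W x && ~~ col x then f x else 0).
Proof.
move=> Wb0 cb0 b0_min u_unit.
have Wc : W (b0 - delta) by move: cb0; rewrite col_parity; case: ifP.
have c_b0 : lt (b0 - delta) b0 by apply: (ltBr Hord _ delta_gt0).
have b0c := gt_eqF Hord c_b0; have fb0 := W_supp Wb0; have u_neq0 := sunit_neq0 u_unit.
have uS : u \in S by case: u_unit.
apply: (irred_criterion HS Hred Hord (m := b0 - delta) (e := b0)).
- apply: (in_series_sub hf) => x /=.
    by case: ifP => _; last case: ifP => _; rewrite ?(mem_S0 HS) ?(in_series_mem hf).
  have [->|xc] := eqVneq x (b0 - delta); first by rewrite W_supp.
  by case: ifP => [/andP[/W_supp]|_] //; rewrite eqxx.
- split; [done | by rewrite eqxx | by rewrite b0c Wb0 cb0 | move=> x].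
  have [->|_] := eqVneq x (b0 - delta); first by left.
  by case: ifP => [Bx fx|_]; [right; apply: b0_min | rewrite eqxx].
- by exists (b0 - delta); rewrite eqxx.
rewrite subKr => x; have [//|xc] := eqVneq x (b0 - delta).
case: ifP => [/andP[Wx cx] fx _|_]; last by rewrite eqxx.
have b0x := b0_min x (introT andP (conj Wx cx)) fx.
have c_xd : lt (b0 - delta) (x + delta).
  exact: (lt_trans Hord c_b0 (le_lt_trans Hord b0x (ltDr Hord _ delta_gt0))).
by rewrite (gt_eqF Hord c_xd) col_step // (negbTE cx) andbF eqxx.
Qed.

Lemma col_g1 : col g1.
Proof. by rewrite col_parity subKr (negbTE W_g0). Qed.

(* With b0 the least odd point and c = b0 - delta, write f c = u + t with u a
   unit: f is the odd part with u at c, plus an even remainder with t at c. *)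
Lemma sum_of_irred_le3_odd b0 : W b0 -> ~~ col b0 ->
  (forall y, W y && ~~ col y -> f y != 0 -> le b0 y) -> sum_of_irred_le S lt 3 f.
Proof.
move=> Wb0 cb0 b0_min; have [_ f0 f1 _] := f_least; have fS := in_series_mem hf.
have Wc : W (b0 - delta) by move: cb0; rewrite col_parity; case: ifP.
have col_c : col (b0 - delta) by move: cb0; rewrite col_parity Wc negbK.
have [u [t [u_unit tS fc_split]]] := sunit_split (fS _) (W_supp Wc).
have c_g0 : g0 == b0 - delta = false by apply: contraNF W_g0 => /eqP ->.
apply: (sum_of_irred_leS (odd_part_irred Wb0 cb0 b0_min u_unit)
  (h := fun x => if x == b0 - delta then t else if W x && ~~ col x then 0 else f x)).
  apply: even_part_sum2.
  - split => x; first by case: ifP => _; last case: ifP => _; rewrite ?(mem_S0 HS).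
    have [->|_] := eqVneq x (b0 - delta); first by rewrite W_supp.
    by case: ifP => [_|/negbT]; rewrite ?eqxx // negb_and negbK => /orP[/negbTE->|->].
  - by rewrite c_g0 (negbTE W_g0) f0.
  - have [c_g1|_] := eqVneq g1 (b0 - delta); last by rewrite col_g1 andbF f1.
    apply: contra_not_neq (W_g1_nonunit _) => [t0|]; last by rewrite c_g1.
    by rewrite c_g1 fc_split t0 addr0.
  - case: W_g1 => [|u1]; [by left | right].
    have [c_g1|_] := eqVneq g1 (b0 - delta).
      by rewrite -c_g1 in Wc; case: (W_g1_nonunit Wc u1).
    by case: ifP => [/andP[W1 _]|]; [case: (W_g1_nonunit W1 u1) | ].
move=> x; have [->|_] := eqVneq x (b0 - delta); first by rewrite fc_split.
by case: ifP; rewrite ?addr0 ?add0r.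
Qed.

End Coloring.

Lemma sum_of_irred_le3_window : sum_of_irred_le S lt 3 f.
Proof.
have [_ f0 f1 _] := f_least; have [fS [e [e_incr f_enum]]] := hf.
have [col col_parity] :=
  parity_coloring Hord e_incr (fun y Wy => f_enum y (W_supp Wy)) delta_gt0.
case: (classic (exists2 b, W b & ~~ col b)) => [[b Wb cb]|all_even].
  have [|b0 [/andP[Wb0 cb0] _ b0_min]] := series_min Hord hf (P := fun x => W x && ~~ col x).
    by exists b; rewrite ?Wb ?W_supp.
  exact: (sum_of_irred_le3_odd col_parity Wb0 cb0 b0_min).
apply: (sum_of_irred_le_mono (m := 2)) => //; apply: (even_part_sum2 col_parity) => //.
split=> // x fx; split=> // Wx; apply/negPn/negP => cx; apply: all_even; by exists x.
Qed.

End Window.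

Lemma sum_of_irred_le3 f : in_series S lt f -> supp_gt1 f -> sum_of_irred_le S lt 3 f.
Proof.
move=> hf /(least_two_exists Hord hf) [g0 [g1 f_least]]; have [g01 f0 f1 _] := f_least.
case: (classic (sunit S (f g1))) => [u1|nu1].
  apply: (sum_of_irred_le3_window hf f_least (W := fun x => (f x != 0) && lt g1 x)).
  - by move=> x /andP[].
  - by move=> x -> ->.
  - by rewrite (lt_asym Hord g01) andbF.
  - by right.
  - by rewrite (negbTE (ltxx Hord g1)) andbF.
apply: (sum_of_irred_le3_window hf f_least (W := fun x => (f x != 0) && (x != g0))).
- by move=> x /andP[].
- by move=> x -> g1x; rewrite (gt_eqF Hord (lt_trans Hord g01 g1x)).
- by rewrite eqxx andbF.
- by left; rewrite f1 (gt_eqF Hord g01).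
- by [].
Qed.

End ThreeIrreducibles.

Section AtomsAreUnits.
Variables (R : idomainType) (S : {pred R}) (G : zmodType) (lt : rel G).
Hypothesis HS : is_semidomain S.
Hypothesis Hred : add_reduced S.
Hypothesis Hord : total_order_compat lt.

Lemma irred_const_single P a x y : series_irred S lt P -> (forall z, P z != 0 -> P z = a) ->
  ~ sunit S a -> P x != 0 -> P y != 0 -> x = y.
Proof.
move=> [hP _ _ P_irr] P_a a_nonunit Px Py.
have [d d_gt0] := in_series_gt0 Hord hP; have a0 : a != 0 by rewrite -(P_a x Px).
have aS : a \in S by rewrite -(P_a x Px) (in_series_mem hP).
pose A (z : G) : R := if z == 0 then a else 0.
pose I (z : G) : R := if P z != 0 then 1 else 0.
have hA : in_series S lt A.
  apply: (in_series_arith Hord (a := 0) d_gt0) => z.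
    by rewrite /A; case: ifP; rewrite ?(mem_S0 HS).
  by rewrite /A; case: ifP => [/eqP -> _|]; [exists 0%N; rewrite addr0 | rewrite eqxx].
have hI : in_series S lt I.
  apply: (in_series_sub hP) => z; rewrite /I; first by case: ifP; rewrite ?(mem_S0 HS) ?(mem_S1 HS).
  by case: ifP => // _; rewrite eqxx.
have AI : series_mul A I P.
  move=> z; exists [:: 0]; split => //.
    by move=> b; rewrite /A; case: ifP => [/eqP -> _ _|]; [rewrite inE | rewrite eqxx].
  rewrite big_seq1 /A eqxx subr0 /I.
  by case: ifP => [/P_a -> |/negbFE/eqP ->]; rewrite ?mulr1 ?mulr0.
have [A_unit|I_unit] := P_irr A I hA hI AI.
  have A0 : A 0 != 0 by rewrite /A eqxx.
  by case: a_nonunit; move: (series_unit_sunit HS Hred A_unit A0); rewrite /A eqxx.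
by apply: (series_unit_single HS Hred I_unit); rewrite /I ?Px ?Py oner_neq0.
Qed.

Lemma atom_sunit_of_sum_of_irred_le n : (exists g : G, g != 0) ->
  (forall f, in_series S lt f -> supp_gt1 f -> sum_of_irred_le S lt n f) ->
  forall a, add_atom S a -> sunit S a.
Proof.
move=> G_nontriv sum_le a a_atom; have [aS a0 _] := a_atom; apply: NNPP => a_nonunit.
have [d d_gt0] := exists_gt0 Hord G_nontriv.
pose f x := if [exists k : 'I_n.+2, x == d *+ k] then a else 0.
have f_at (k : 'I_n.+2) : f (d *+ k) = a by rewrite /f; case: existsP => // -[]; exists k.
have hf : in_series S lt f.
  apply: (in_series_arith Hord (a := 0) d_gt0) => x.
    by rewrite /f; case: ifP; rewrite ?(mem_S0 HS).
  by rewrite /f; case: existsP => [[k /eqP ->] _|_]; [exists k; rewrite add0r | rewrite eqxx].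
have f_gt1 : supp_gt1 f.
  have k1 : (1 < n.+2)%N by [].
  exists (d *+ @ord0 n.+1), (d *+ Ordinal k1); rewrite !f_at a0 /= mulr0n mulr1n.
  by rewrite (lt_eqF Hord d_gt0).
have [l [l_size l_irr f_sum]] := sum_le f hf f_gt1.
pose P (j : 'I_(size l)) := nth (fun _ => 0) l j.
have f_sumP x : f x = \sum_j P j x by rewrite f_sum (big_nth (fun _ => 0)) big_mkord.
have PS j x : P j x \in S by have [[+ _] _ _ _] := l_irr j (ltn_ord j); apply.
have P_a j x : P j x != 0 -> P j x = a.
  move=> Pjx; have fx : f x != 0 by rewrite f_sumP (sumS_neq0 HS Hred _ (mem_index_enum j)).
  have fa : f x = a by move: fx; rewrite /f; case: ifP; rewrite ?eqxx.
  have atom_sum : add_atom S (\sum_i P i x) by rewrite -f_sumP fa.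
  by rewrite (atom_sum_term HS atom_sum (PS^~ x) Pjx) -f_sumP.
have hit (k : 'I_n.+2) : exists j, P j (d *+ k) != 0.
  apply: NNPP => none; move: a0; rewrite -(f_at k) f_sumP big1 ?eqxx // => j _.
  by apply/eqP; apply: NNPP => Pj; apply: none; exists j; apply/negP.
have [phi phi_hit] := fin_all_exists hit.
have phi_inj : injective phi.
  move=> k k' kk'; apply/val_inj/(enum_inj Hord (mulrn_incr Hord d_gt0)) => /=.
  have Pk' := phi_hit k'; rewrite -kk' in Pk'.
  exact: (irred_const_single (l_irr _ (ltn_ord (phi k))) (P_a (phi k)) a_nonunit (phi_hit k) Pk').
have := leq_card _ phi_inj; rewrite !card_ord => n2_le.
by have := leq_trans n2_le l_size; rewrite ltnNge leqnSn.
Qed.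

End AtomsAreUnits.

Theorem corollary4p7 (R : idomainType) (S : {pred R}) (G : zmodType) (lt : rel G) :
  is_semidomain S -> add_reduced S -> add_furstenberg S ->
  total_order_compat lt -> torsion_free G -> fin_gen G ->
  (exists g : G, g != 0) ->
  let P1 := forall a : R, a \in S -> (add_atom S a <-> sunit S a) in
  let P2 := forall f : G -> R, in_series S lt f -> supp_gt1 f ->
              sum_of_irred_le S lt 3 f in
  let P3 := exists n : nat, (2 < n)%N /\
              forall f : G -> R, in_series S lt f -> supp_gt1 f ->
                sum_of_irred_le S lt n f in
  (P1 <-> P2) /\ (P2 <-> P3).
Proof.
move=> HS Hred Hfur Hord _ _ G_nontriv P1 P2 P3.
have P12 : P1 -> P2 by move=> atom_sunit f; apply: (sum_of_irred_le3 HS Hred Hord Hfur atom_sunit).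
have P23 : P2 -> P3 by exists 3%N.
have P31 : P3 -> P1.
  move=> [n [_ sum_le]] a aS; split; last exact: (sunit_atom HS Hfur).
  exact: (atom_sunit_of_sum_of_irred_le HS Hred Hord G_nontriv sum_le).
by split; [split=> [/P12|/P23/P31] | split=> [/P23|/P31/P12]].
Qed.
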